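(* Let $\mu,\sigma$ be nonzero constants, let $K$ be an open interval not containing $0$, and let $W$ be a smooth function on $K$ such that $R(z):=(zW(z))'$ satisfies $R(z)\neq0$ for all $z\in K$. Then $R$ satisfies $$-\sigma zRR'''+\sigma zR'R''-2\sigma RR''-9\mu R^2R'-zR'+2R=0$$ on $K$ if and only if there is a constant $c_1$ such that $W$ satisfies the third-order equation $$\sigma W'''=-3\sigma\frac{W''}{z}-9\mu (W')^2-9\mu\frac{WW'}{z}+c_1\frac{W'}{z^2}+c_1\frac{W}{z^3}+\frac1z$$ on $K$. *)

From Stdlib Require Import Reals.
From Coquelicot Require Import Coquelicot.
Open Scope R_scope.

Definition in_open_interval (a b : Rbar) (z : R) : Prop :=
  Rbar_lt a z /\ Rbar_lt z b.

Definition smooth_on (a b : Rbar) (f : R -> R) : Prop :=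
  forall (n : nat) (z : R), in_open_interval a b z -> ex_derive_n f n z.

Definition Rfun (W : R -> R) : R -> R := fun z => Derive (fun t => t * W t) z.

From Stdlib Require Import Reals Lra.
From Coquelicot Require Import Coquelicot.
Open Scope R_scope.

(* Since R = (zW)' = W + zW', its derivatives are R^(k) = (k+1) W^(k) + z W^(k+1).
   Multiplied by z^3, the W-equation reads N = c1 (W + zW') = c1 R with
   N = sigma z^3 W''' + 3 sigma z^2 W'' + 9 mu z^3 W'^2 + 9 mu z^2 W W' - z^2,
   and a direct computation gives (N/R)' = - z E / R^2, where E is the
   left-hand side of the R-equation.  As z and R do not vanish on the interval,
   E vanishes identically there iff N/R is constant, i.e. iff the W-equation
   holds for the constant c1 = N/R. *)

Lemma in_open_interval_locally (a b : Rbar) (z : R) :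
  in_open_interval a b z -> locally z (in_open_interval a b).
Proof. exact (open_and _ _ (open_Rbar_gt a) (open_Rbar_lt b) z). Qed.

Lemma in_open_interval_exists (a b : Rbar) :
  Rbar_lt a b -> exists z, in_open_interval a b z.
Proof.
  unfold in_open_interval.
  destruct a as [a| |], b as [b| |]; simpl; intros Hab; try contradiction.
  - exists ((a + b) / 2); simpl; lra.
  - exists (a + 1); simpl; lra.
  - exists (b - 1); simpl; lra.
  - exists 0; simpl; tauto.
Qed.

Lemma in_open_interval_between (a b : Rbar) (x y c : R) :
  in_open_interval a b x -> in_open_interval a b y ->
  Rmin x y <= c <= Rmax x y -> in_open_interval a b c.
Proof.
  unfold in_open_interval, Rmin, Rmax; intros [Hax Hxb] [Hay Hyb] Hc.
  destruct (Rle_dec x y), a as [a| |], b as [b| |]; simpl in *; try tauto; lra.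
Qed.

Lemma is_derive_0_interval_const (a b : Rbar) (F : R -> R) :
  (forall t, in_open_interval a b t -> is_derive F t 0) ->
  forall x y, in_open_interval a b x -> in_open_interval a b y -> F x = F y.
Proof.
  intros HF x y Hx Hy.
  assert (HFc : forall c, Rmin x y <= c <= Rmax x y -> is_derive F c 0).
  { intros c Hc; apply HF; exact (in_open_interval_between a b x y c Hx Hy Hc). }
  destruct (MVT_gen F x y (fun _ => 0)) as [c [_ Hc]].
  - intros t Ht; apply HFc; lra.
  - intros t Ht; apply continuity_pt_filterlim.
    apply (ex_derive_continuous (K := R_AbsRing) (V := R_NormedModule)).
    exists 0; exact (HFc t Ht).
  - lra.
Qed.

Section SmoothOn.

Variables (a b : Rbar) (W : R -> R).
Hypothesis W_smooth : smooth_on a b W.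

Lemma is_derive_Derive_n_smooth (k : nat) (t : R) : in_open_interval a b t ->
  is_derive (Derive_n W k) t (Derive_n W (S k) t).
Proof. intros Ht; apply Derive_correct; exact (W_smooth (S k) t Ht). Qed.

Lemma is_derive_Derive_n_id_mul_step (c : R) (k : nat) (t : R) :
  in_open_interval a b t ->
  is_derive (fun t => c * Derive_n W k t + t * Derive_n W (S k) t) t
    ((c + 1) * Derive_n W (S k) t + t * Derive_n W (S (S k)) t).
Proof.
  intros Ht.
  pose proof (is_derive_Derive_n_smooth k t Ht) as Hk.
  pose proof (is_derive_Derive_n_smooth (S k) t Ht) as HSk.
  auto_derive.
  - split; [exists (Derive_n W (S k) t) | split; [exists (Derive_n W (S (S k)) t) |]]; auto.
  - change (fun x => Derive_n W k x) with (Derive_n W k); simpl; ring.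
Qed.

Lemma Derive_n_Rfun (k : nat) (z : R) : in_open_interval a b z ->
  Derive_n (Rfun W) k z = INR (S k) * Derive_n W k z + z * Derive_n W (S k) z.
Proof.
  revert z; induction k as [|k IHk]; intros z Hz.
  - unfold Rfun; apply is_derive_unique.
    pose proof (is_derive_Derive_n_smooth 0 z Hz) as H0.
    auto_derive; [exists (Derive_n W 1 z); exact H0 | simpl; ring].
  - simpl Derive_n at 1.
    rewrite (Derive_ext_loc _ (fun t => INR (S k) * Derive_n W k t + t * Derive_n W (S k) t)).
    + rewrite (S_INR (S k)); apply is_derive_unique, is_derive_Derive_n_id_mul_step; exact Hz.
    + exact (filter_imp _ _ IHk (in_open_interval_locally a b z Hz)).
Qed.

Lemma Rfun_eq_interval (z : R) : in_open_interval a b z ->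
  Rfun W z = W z + z * Derive_n W 1 z.
Proof.
  intros Hz; change (Rfun W z) with (Derive_n (Rfun W) 0 z).
  rewrite (Derive_n_Rfun 0 z Hz); simpl; ring.
Qed.

End SmoothOn.

Definition first_integral (mu sigma : R) (W : R -> R) (z : R) : R :=
  (sigma * z ^ 3 * Derive_n W 3 z + 3 * sigma * z ^ 2 * Derive_n W 2 z
   + 9 * mu * z ^ 3 * Derive_n W 1 z ^ 2 + 9 * mu * z ^ 2 * W z * Derive_n W 1 z - z ^ 2)
  / (W z + z * Derive_n W 1 z).

Definition R_ode_residual (mu sigma z R0 R1 R2 R3 : R) : R :=
  - sigma * z * R0 * R3 + sigma * z * R1 * R2 - 2 * sigma * R0 * R2
  - 9 * mu * R0 ^ 2 * R1 - z * R1 + 2 * R0.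

Section FirstIntegral.

Variables (mu sigma : R) (a b : Rbar) (W : R -> R).
Hypothesis W_smooth : smooth_on a b W.
Hypothesis zero_notin : ~ in_open_interval a b 0.
Hypothesis Rfun_neq0 : forall z, in_open_interval a b z -> Rfun W z <> 0.

Let F := first_integral mu sigma W.
Let E z := R_ode_residual mu sigma z (Rfun W z) (Derive_n (Rfun W) 1 z)
             (Derive_n (Rfun W) 2 z) (Derive_n (Rfun W) 3 z).

Lemma in_open_interval_neq0 (z : R) : in_open_interval a b z -> z <> 0.
Proof. intros Hz ->; exact (zero_notin Hz). Qed.

Lemma is_derive_first_integral (z : R) : in_open_interval a b z ->
  is_derive F z (- z * E z / Rfun W z ^ 2).
Proof.
  intros Hz.
  pose proof (Rfun_neq0 z Hz) as HR0.
  rewrite (Rfun_eq_interval a b W W_smooth z Hz) in HR0.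
  assert (HRk : forall k, Derive_n (Rfun W) k z
                   = INR (S k) * Derive_n W k z + z * Derive_n W (S k) z)
    by (intros k; exact (Derive_n_Rfun a b W W_smooth k z Hz)).
  assert (HWk : forall k, ex_derive (Derive_n W k) z)
    by (intros k; exact (W_smooth (S k) z Hz)).
  unfold F, E, first_integral, R_ode_residual.
  rewrite (Rfun_eq_interval a b W W_smooth z Hz), !HRk; simpl INR.
  auto_derive.
  - repeat split; first [exact HR0 | exact (HWk 0%nat) | exact (HWk 1%nat)
                        | exact (HWk 2%nat) | exact (HWk 3%nat)].
  - cbn [Derive_n]; field; exact HR0.
Qed.

Lemma R_ode_iff_first_integral_stationary (z : R) : in_open_interval a b z ->
  E z = 0 <-> is_derive F z 0.
Proof.
  intros Hz.
  pose proof (is_derive_first_integral z Hz) as HF.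
  pose proof (in_open_interval_neq0 z Hz) as Hz0.
  pose proof (Rfun_neq0 z Hz) as HR0.
  split.
  - intros HE; rewrite HE in HF.
    replace 0 with (- z * 0 / Rfun W z ^ 2) by (field; exact HR0); exact HF.
  - intros HF0.
    pose proof (is_derive_unique _ _ _ HF) as HD.
    rewrite (is_derive_unique _ _ _ HF0) in HD.
    replace (E z) with ((- z * E z / Rfun W z ^ 2) * (Rfun W z ^ 2 / - z))
      by (field; split; assumption).
    rewrite <- HD; ring.
Qed.

Lemma W_equation_iff_first_integral (c1 z : R) : in_open_interval a b z ->
  sigma * Derive_n W 3 z
  = - 3 * sigma * Derive_n W 2 z / z - 9 * mu * Derive_n W 1 z ^ 2
    - 9 * mu * W z * Derive_n W 1 z / z + c1 * Derive_n W 1 z / z ^ 2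
    + c1 * W z / z ^ 3 + 1 / z
  <-> F z = c1.
Proof.
  intros Hz.
  pose proof (in_open_interval_neq0 z Hz) as Hz0.
  pose proof (Rfun_neq0 z Hz) as HR0.
  rewrite (Rfun_eq_interval a b W W_smooth z Hz) in HR0.
  unfold F, first_integral; split; intros HW.
  - replace (sigma * z ^ 3 * Derive_n W 3 z) with (z ^ 3 * (sigma * Derive_n W 3 z)) by ring.
    rewrite HW; field; split; assumption.
  - rewrite <- HW; field; split; assumption.
Qed.

End FirstIntegral.

Theorem mainTheorem6 (mu sigma : R) (a b : Rbar) (W : R -> R) :
  mu <> 0 -> sigma <> 0 ->
  Rbar_lt a b ->
  ~ in_open_interval a b 0 ->
  smooth_on a b W ->
  (forall z, in_open_interval a b z -> Rfun W z <> 0) ->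
  ((forall z, in_open_interval a b z ->
      let R0 := Rfun W z in
      let R1 := Derive_n (Rfun W) 1 z in
      let R2 := Derive_n (Rfun W) 2 z in
      let R3 := Derive_n (Rfun W) 3 z in
      - sigma * z * R0 * R3 + sigma * z * R1 * R2 - 2 * sigma * R0 * R2
      - 9 * mu * R0 ^ 2 * R1 - z * R1 + 2 * R0 = 0)
   <->
   (exists c1 : R, forall z, in_open_interval a b z ->
      let W0 := W z in
      let W1 := Derive_n W 1 z in
      let W2 := Derive_n W 2 z in
      let W3 := Derive_n W 3 z in
      sigma * W3 = - 3 * sigma * W2 / z - 9 * mu * W1 ^ 2 - 9 * mu * W0 * W1 / z
                   + c1 * W1 / z ^ 2 + c1 * W0 / z ^ 3 + 1 / z)).
Proof.
  intros _ _ Hab H0 HW HR.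
  pose proof (W_equation_iff_first_integral mu sigma a b W HW H0 HR) as HWeq.
  pose proof (R_ode_iff_first_integral_stationary mu sigma a b W HW H0 HR) as HRode.
  split.
  - intros HE.
    destruct (in_open_interval_exists a b Hab) as [z0 Hz0].
    exists (first_integral mu sigma W z0); intros z Hz.
    apply (HWeq _ z Hz), (is_derive_0_interval_const a b); [|exact Hz|exact Hz0].
    intros t Ht; apply (HRode t Ht); exact (HE t Ht).
  - intros [c1 Hc] z Hz.
    apply (HRode z Hz), (is_derive_ext_loc (fun _ => c1)).
    + apply (filter_imp (in_open_interval a b)); [|exact (in_open_interval_locally a b z Hz)].
      intros t Ht; symmetry; exact (proj1 (HWeq c1 t Ht) (Hc t Ht)).
    + apply (is_derive_const (K := R_AbsRing) (V := R_NormedModule)).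
Qed.
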